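(* Consider $N$ double-integrator agents $$\dot x_i=v_i,\qquad \dot v_i=\sum_{j=1}^N\alpha_{ij}\big((x_j-x_i)+(y_j-y_i)\big),\qquad y_i=\mathrm{sat}(v_i),\qquad i\in\{1,\dots,N\},$$ where the constant weights $\alpha_{ij}=\alpha_{ji}\ge0$ define an undirected connected graph and $\mathrm{sat}(v)=\mathrm{sign}(v)\min\{|v|,s\}$ with a common level $s>0$. Assume the agents are not in consensus at $t_0$ (i.e. it is not the case that all $x_i(t_0)$ are equal and all $v_i(t_0)$ are equal). Then $\lim_{t\to\infty}(x_i(t)-x_j(t))=0$ and $\lim_{t\to\infty}(v_i(t)-v_j(t))=0$ for all $i,j$ if and only if $$\frac1N\Big|\sum_{i=1}^N v_i(t_0)\Big|\le s.$$
   Context: The graph is connected if any two nodes are joined by a path of edges $\{i,j\}$ with $\alpha_{ij}>0$. *)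

From Stdlib Require Import Reals Lra List.
Import ListNotations.
Open Scope R_scope.

(* Sum over agents i = 0, ..., N-1 (agents are indexed 0..N-1). *)
Definition sumN (N : nat) (f : nat -> R) : R :=
  fold_right Rplus 0 (map f (seq 0 N)).

Definition sign (v : R) : R :=
  if Rlt_dec 0 v then 1 else if Rlt_dec v 0 then -1 else 0.

Definition sat (s v : R) : R := sign v * Rmin (Rabs v) s.

Inductive walk (N : nat) (alpha : nat -> nat -> R) : nat -> nat -> Prop :=
  | walk_refl : forall i, (i < N)%nat -> walk N alpha i i
  | walk_step : forall i k j, (i < N)%nat -> (k < N)%nat ->
      0 < alpha i k -> walk N alpha k j -> walk N alpha i j.

Definition connected_graph (N : nat) (alpha : nat -> nat -> R) : Prop :=
  forall i j, (i < N)%nat -> (j < N)%nat -> walk N alpha i j.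

Definition tends_to_0_at_infty (f : R -> R) : Prop :=
  forall eps, 0 < eps -> exists T, forall t, T <= t -> Rabs (f t) < eps.

From Stdlib Require Import Reals Lra Lia List FunctionalExtensionality.
Open Scope R_scope.

(* Summing the velocity equations shows that the mean velocity [m] is invariant.  The energy
   [1/4 sum_ij a_ij (x_i - x_j)^2 + 1/2 sum_i (v_i - m)^2] has derivative
   [-1/2 sum_ij a_ij (v_i - v_j) (sat v_i - sat v_j) <= 0], so velocities stay bounded.

   If [|m| <= s], bounded velocities around an unsaturated mean force the saturated velocities
   apart whenever the velocities are, so the dissipation controls the velocity variance; adding
   a small multiple of the cross term [sum_i (v_i - m) (L x)_i] then gives a strict Lyapunov
   function, the energy decays like [1 / (1 + lam t)], and both disagreements vanish.

   If [|m| > s] and consensus is reached, all velocities eventually saturate on the same side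
   of the mean, the dissipation vanishes and the energy becomes constant, hence zero.  Since
   [energy' >= -4 A energy] with [A] the total edge weight, it must then vanish at [t0] already,
   i.e. the agents start in consensus. *)

Lemma sumN_O f : sumN 0 f = 0.
Proof. reflexivity. Qed.

Lemma sumN_S n f : sumN (S n) f = sumN n f + f n.
Proof.
  unfold sumN. rewrite seq_S, map_app, fold_right_app. simpl.
  generalize (map f (seq 0 n)). intros l. induction l as [|b l IH]; simpl; lra.
Qed.

Lemma sumN_ext n f g : (forall i, (i < n)%nat -> f i = g i) -> sumN n f = sumN n g.
Proof.
  induction n as [|n IH]; intros H; [reflexivity|].
  rewrite !sumN_S, IH, (H n); auto.
Qed.

Lemma sumN_add n f g : sumN n (fun i => f i + g i) = sumN n f + sumN n g.
Proof. induction n as [|n IH]; [rewrite !sumN_O; lra|]. rewrite !sumN_S, IH; lra. Qed.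

Lemma sumN_sub n f g : sumN n (fun i => f i - g i) = sumN n f - sumN n g.
Proof. induction n as [|n IH]; [rewrite !sumN_O; lra|]. rewrite !sumN_S, IH; lra. Qed.

Lemma sumN_scal n c f : sumN n (fun i => c * f i) = c * sumN n f.
Proof. induction n as [|n IH]; [rewrite !sumN_O; lra|]. rewrite !sumN_S, IH; lra. Qed.

Lemma sumN_const n c : sumN n (fun _ => c) = INR n * c.
Proof. induction n as [|n IH]; [rewrite sumN_O; simpl; ring|]. rewrite sumN_S, IH, S_INR; ring. Qed.

Lemma sumN_le n f g : (forall i, (i < n)%nat -> f i <= g i) -> sumN n f <= sumN n g.
Proof.
  induction n as [|n IH]; intros H; [rewrite !sumN_O; lra|]. rewrite !sumN_S.
  assert (f n <= g n) by auto. assert (sumN n f <= sumN n g) by auto. lra.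
Qed.

Lemma sumN_nonneg n f : (forall i, (i < n)%nat -> 0 <= f i) -> 0 <= sumN n f.
Proof.
  intros H. replace 0 with (sumN n (fun _ => 0)) by (rewrite sumN_const; ring).
  now apply sumN_le.
Qed.

Lemma sumN_term_le n f k :
  (forall i, (i < n)%nat -> 0 <= f i) -> (k < n)%nat -> f k <= sumN n f.
Proof.
  induction n as [|n IH]; intros H Hk; [lia|]. rewrite sumN_S.
  assert (0 <= sumN n f) by (apply sumN_nonneg; auto).
  destruct (Nat.eq_dec k n) as [->|Hne]; [lra|].
  assert (f k <= sumN n f) by (apply IH; auto; lia).
  assert (0 <= f n) by auto. lra.
Qed.

Lemma Rabs_sumN_le n f : Rabs (sumN n f) <= sumN n (fun i => Rabs (f i)).
Proof.
  induction n as [|n IH]; [rewrite !sumN_O, Rabs_R0; lra|].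
  rewrite !sumN_S. eapply Rle_trans; [apply Rabs_triang|]. lra.
Qed.

Lemma sumN_swap n m F :
  sumN n (fun i => sumN m (fun j => F i j)) = sumN m (fun j => sumN n (fun i => F i j)).
Proof.
  induction n as [|n IH].
  - symmetry. rewrite (sumN_ext m _ (fun _ => 0)) by reflexivity. rewrite sumN_const, sumN_O; simpl; ring.
  - rewrite sumN_S, IH, <- sumN_add. apply sumN_ext. intros. now rewrite sumN_S.
Qed.

Lemma sumN_cauchy_schwarz n (w d : nat -> R) : (forall j, (j < n)%nat -> 0 <= w j) ->
  sumN n (fun j => w j * d j) * sumN n (fun j => w j * d j)
  <= sumN n w * sumN n (fun j => w j * (d j * d j)).
Proof.
  intros Hw. set (S := sumN n w). set (T := sumN n (fun j => w j * d j)).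
  set (Q := sumN n (fun j => w j * (d j * d j))).
  assert (HS : 0 <= S) by (apply sumN_nonneg; auto).
  destruct (Rle_lt_or_eq_dec _ _ HS) as [Hpos|Hzero].
  - (* expand the weighted variance around the weighted mean [T / S] *)
    set (k := T / S).
    assert (Hvar : 0 <= sumN n (fun j => w j * ((d j - k) * (d j - k)))).
    { apply sumN_nonneg; intros. apply Rmult_le_pos; auto. apply Rle_0_sqr. }
    replace (sumN n (fun j => w j * ((d j - k) * (d j - k)))) with (Q - 2 * k * T + k * k * S)
      in Hvar by (unfold Q, T, S; rewrite <- !sumN_scal, <- sumN_sub, <- sumN_add;
                  apply sumN_ext; intros; ring).
    assert (HkS : k * S = T) by (unfold k; field; lra).
    assert (T * T = S * (k * T)) by (rewrite <- HkS; ring). nra.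
  - assert (Hw0 : forall j, (j < n)%nat -> w j = 0).
    { intros j Hj. assert (w j <= S) by (apply sumN_term_le; auto). specialize (Hw j Hj). lra. }
    assert (HT : T = 0).
    { unfold T. rewrite (sumN_ext _ _ (fun _ => 0)) by (intros; rewrite Hw0; auto; ring).
      rewrite sumN_const; ring. }
    rewrite HT, <- Hzero. lra.
Qed.

Lemma exists_argmax n (f : nat -> R) :
  (0 < n)%nat -> exists p, (p < n)%nat /\ forall i, (i < n)%nat -> f i <= f p.
Proof.
  induction n as [|n IH]; intros Hn; [lia|].
  destruct (Nat.eq_dec n 0) as [->|Hn0].
  - exists 0%nat. split; [lia|]. intros i Hi. replace i with 0%nat by lia. lra.
  - destruct IH as [p [Hp Hmax]]; [lia|].
    destruct (Rle_dec (f p) (f n)).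
    + exists n. split; [lia|]. intros i Hi.
      destruct (Nat.eq_dec i n) as [->|]; [lra|]. specialize (Hmax i ltac:(lia)). lra.
    + exists p. split; [lia|]. intros i Hi.
      destruct (Nat.eq_dec i n) as [->|]; [lra|]. apply Hmax; lia.
Qed.

Lemma common_threshold n (P : nat -> R -> Prop) a :
  (forall k b c, P k b -> b <= c -> P k c) ->
  (forall k, (k < n)%nat -> exists b, P k b) ->
  exists b, a <= b /\ forall k, (k < n)%nat -> P k b.
Proof.
  intros Hmono. induction n as [|n IH]; intros H.
  - exists a. split; [lra| intros; lia].
  - destruct IH as [b1 [Hab1 H1]]; [intros; apply H; lia|].
    destruct (H n) as [b2 H2]; [lia|].
    exists (Rmax b1 b2). split; [eapply Rle_trans; [apply Hab1| apply Rmax_l]|].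
    intros k Hk. destruct (Nat.eq_dec k n) as [->|].
    + eapply Hmono; [apply H2| apply Rmax_r].
    + eapply Hmono; [apply H1; lia| apply Rmax_l].
Qed.

Lemma Rabs_le_bounds a b : Rabs a <= b -> - b <= a <= b.
Proof. intros H. pose proof (Rle_abs a). pose proof (Rle_abs (- a)). rewrite Rabs_Ropp in *. lra. Qed.

Lemma sub_mean_abs_le n (a : nat -> R) m rho : (0 < n)%nat -> sumN n a = INR n * m ->
  (forall i j, (i < n)%nat -> (j < n)%nat -> Rabs (a i - a j) <= rho) ->
  forall i, (i < n)%nat -> Rabs (a i - m) <= rho.
Proof.
  intros Hn Hsum Hgap i Hi.
  assert (0 < INR n) by (apply lt_0_INR; auto).
  assert (E : sumN n (fun j => a i - a j) = INR n * (a i - m)).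
  { rewrite sumN_sub, sumN_const, Hsum. ring. }
  assert (sumN n (fun j => a i - a j) <= sumN n (fun _ => rho)).
  { apply sumN_le; intros j Hj. specialize (Hgap i j Hi Hj). apply Rabs_le_bounds in Hgap; lra. }
  assert (sumN n (fun _ => - rho) <= sumN n (fun j => a i - a j)).
  { apply sumN_le; intros j Hj. specialize (Hgap i j Hi Hj). apply Rabs_le_bounds in Hgap; lra. }
  rewrite !sumN_const in *. apply Rabs_le. split; nra.
Qed.

Lemma zero_sum_extremes n (a : nat -> R) : (0 < n)%nat -> sumN n a = 0 ->
  exists p q, (p < n)%nat /\ (q < n)%nat /\
    (forall i, (i < n)%nat -> a q <= a i <= a p) /\
    sumN n (fun i => a i * a i) <= INR n * ((a p - a q) * (a p - a q)) /\
    a p - a q <= INR n * a p /\ a p - a q <= INR n * (- a q).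
Proof.
  intros Hn Hsum.
  destruct (exists_argmax n a Hn) as [p [Hp Hmax]].
  destruct (exists_argmax n (fun i => - a i) Hn) as [q [Hq Hmin]].
  assert (Hbetween : forall i, (i < n)%nat -> a q <= a i <= a p)
    by (intros i Hi; specialize (Hmax i Hi); specialize (Hmin i Hi); lra).
  exists p, q. do 3 (split; auto). split; [|split].
  - rewrite <- sumN_const. apply sumN_le. intros i Hi.
    destruct (Hbetween i Hi). assert (a q <= 0 <= a p).
    { split; apply Rnot_lt_le; intros Hlt.
      + assert (sumN n (fun _ => a q) <= sumN n a) by (apply sumN_le; apply Hbetween).
        rewrite sumN_const in H1. pose proof (lt_0_INR n Hn). nra.
      + assert (sumN n a <= sumN n (fun _ => a p)) by (apply sumN_le; apply Hbetween).
        rewrite sumN_const in H1. pose proof (lt_0_INR n Hn). nra. }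
    nra.
  - replace (INR n * a p) with (sumN n (fun i => a p - a i)) by (rewrite sumN_sub, sumN_const, Hsum; ring).
    apply (sumN_term_le n (fun i => a p - a i) q); auto.
    intros i Hi. destruct (Hbetween i Hi); lra.
  - replace (INR n * - a q) with (sumN n (fun i => a i - a q)) by (rewrite sumN_sub, sumN_const, Hsum; ring).
    apply (sumN_term_le n (fun i => a i - a q) p); auto.
    intros i Hi. destruct (Hbetween i Hi); lra.
Qed.

Lemma derivable_pt_lim_sumN n (f : nat -> R -> R) d t :
  (forall i, (i < n)%nat -> derivable_pt_lim (f i) t (d i)) ->
  derivable_pt_lim (fun u => sumN n (fun i => f i u)) t (sumN n d).
Proof.
  induction n as [|n IH]; intros H.
  - apply derivable_pt_lim_const.
  - replace (fun u => sumN (S n) (fun i => f i u)) with (fun u => sumN n (fun i => f i u) + f n u)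
      by (apply functional_extensionality; intros; now rewrite sumN_S).
    rewrite sumN_S. apply derivable_pt_lim_plus; auto.
Qed.

Lemma nonincreasing_of_derive_nonpos f f' a :
  (forall t, a <= t -> derivable_pt_lim f t (f' t)) -> (forall t, a <= t -> f' t <= 0) ->
  forall t1 t2, a <= t1 -> t1 <= t2 -> f t2 <= f t1.
Proof.
  intros Hd Hneg t1 t2 H1 H2. destruct (Rle_lt_or_eq_dec _ _ H2) as [Hlt|<-]; [|lra].
  destruct (MVT_cor2 f f' t1 t2 Hlt) as [c [Hc Hct]]; [intros c Hc; apply Hd; lra|].
  assert (f' c <= 0) by (apply Hneg; lra). nra.
Qed.

Lemma exp_weighted_nonincreasing U U' lam a :
  (forall t, a <= t -> derivable_pt_lim U t (U' t)) -> (forall t, a <= t -> U' t <= - lam * U t) ->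
  forall t1 t2, a <= t1 -> t1 <= t2 -> U t2 * exp (lam * t2) <= U t1 * exp (lam * t1).
Proof.
  intros Hd Hle. apply (nonincreasing_of_derive_nonpos (fun t => U t * exp (lam * t))
    (fun t => U' t * exp (lam * t) + U t * (lam * exp (lam * t))) a).
  - intros t Ht. apply (derivable_pt_lim_mult U (fun u => exp (lam * u))); [auto|].
    replace (lam * exp (lam * t)) with (exp (lam * t) * (lam * 1)) by ring.
    apply (derivable_pt_lim_comp (fun u => lam * u) exp t (lam * 1) (exp (lam * t))).
    + apply derivable_pt_lim_scal, derivable_pt_lim_id.
    + apply derivable_pt_lim_exp.
  - intros t Ht. pose proof (exp_pos (lam * t)). pose proof (Hle t Ht). nra.
Qed.

Lemma le_inv_linear_of_derive_le U U' lam a : 0 < lam -> 0 <= U a ->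
  (forall t, a <= t -> derivable_pt_lim U t (U' t)) -> (forall t, a <= t -> U' t <= - lam * U t) ->
  forall t, a <= t -> U t <= U a / (1 + lam * (t - a)).
Proof.
  intros Hlam HUa Hd Hle t Ht.
  pose proof (exp_weighted_nonincreasing U U' lam a Hd Hle a t (Rle_refl a) Ht) as Hexp.
  assert (Hsplit : exp (lam * t) = exp (lam * a) * exp (lam * (t - a)))
    by (rewrite <- exp_plus; f_equal; ring).
  pose proof (exp_pos (lam * a)). pose proof (exp_pos (lam * (t - a))).
  assert (1 + lam * (t - a) <= exp (lam * (t - a))).
  { destruct (Req_dec (t - a) 0) as [->|]; [rewrite Rmult_0_r, exp_0; lra|].
    left. apply exp_ineq1. nra. }
  assert (HU : U t * exp (lam * (t - a)) <= U a) by (rewrite Hsplit in Hexp; nra).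
  apply Rmult_le_reg_r with (1 + lam * (t - a)); [nra|].
  unfold Rdiv. rewrite Rmult_assoc, Rinv_l by nra.
  rewrite Rmult_1_r. destruct (Rle_dec 0 (U t)) as [HUt|HUt].
  - apply Rle_trans with (U t * exp (lam * (t - a))); [apply Rmult_le_compat_l|]; lra.
  - assert (0 <= - U t * (1 + lam * (t - a))) by (apply Rmult_le_pos; nra). lra.
Qed.

Lemma tends_to_0_of_sq_le_inv_linear (f : R -> R) a B lam : 0 < lam ->
  (forall t, a <= t -> f t * f t <= B / (1 + lam * (t - a))) -> tends_to_0_at_infty f.
Proof.
  intros Hlam Hf eps Heps.
  set (B' := Rmax B 0).
  exists (a + B' / (lam * (eps * eps))). intros t Ht.
  assert (He2 : 0 < eps * eps) by nra.
  assert (HB' : 0 <= B' / (lam * (eps * eps)))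
    by (apply Rmult_le_pos; [apply Rmax_r| left; apply Rinv_0_lt_compat; nra]).
  assert (Hden : 0 < 1 + lam * (t - a)) by nra.
  assert (HB : B' < eps * eps * (1 + lam * (t - a))).
  { assert (lam * (eps * eps) * (B' / (lam * (eps * eps))) = B') by (field; nra).
    assert (lam * (eps * eps) * (B' / (lam * (eps * eps))) <= lam * (eps * eps) * (t - a))
      by (apply Rmult_le_compat_l; nra). nra. }
  assert (Hsq : f t * f t < eps * eps).
  { apply Rle_lt_trans with (B / (1 + lam * (t - a))); [apply Hf; lra|].
    apply Rmult_lt_reg_r with (1 + lam * (t - a)); auto.
    unfold Rdiv. rewrite Rmult_assoc, Rinv_l by lra. pose proof (Rmax_l B 0). fold B' in H. lra. }
  rewrite <- (Rabs_right eps) by lra. apply Rsqr_lt_abs_0. unfold Rsqr. lra.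
Qed.

Lemma tends_to_0_uniform n (f : nat -> nat -> R -> R) a :
  (forall i j, (i < n)%nat -> (j < n)%nat -> tends_to_0_at_infty (f i j)) ->
  forall rho, 0 < rho -> exists T, a <= T /\
    forall t, T <= t -> forall i j, (i < n)%nat -> (j < n)%nat -> Rabs (f i j t) < rho.
Proof.
  intros Hf rho Hrho.
  destruct (common_threshold n (fun i T => forall t, T <= t -> forall j, (j < n)%nat ->
              Rabs (f i j t) < rho) a) as [T [HaT HT]].
  - intros k b c Hb Hbc t Ht. apply Hb. lra.
  - intros i Hi.
    destruct (common_threshold n (fun j T => forall t, T <= t -> Rabs (f i j t) < rho) a)
      as [T [_ HT]].
    + intros k b c Hb Hbc t Ht. apply Hb. lra.
    + intros j Hj. apply (Hf i j Hi Hj rho Hrho).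
    + exists T. intros t Ht j Hj. apply HT; auto.
  - exists T. split; [exact HaT|]. intros t Ht i j Hi Hj. apply HT; auto.
Qed.

Definition clamp (s v : R) : R := Rmax (- s) (Rmin v s).

Lemma sat_eq_clamp s v : 0 < s -> sat s v = clamp s v.
Proof.
  intros Hs. unfold sat, sign, clamp, Rmin, Rmax.
  destruct (Rlt_dec 0 v); [|destruct (Rlt_dec v 0)];
  repeat destruct Rle_dec; unfold Rabs in *; repeat destruct Rcase_abs; lra.
Qed.

Ltac clamp_cases := unfold clamp, Rmin, Rmax; repeat destruct Rle_dec.

Lemma clamp_above s v : 0 < s -> s <= v -> clamp s v = s.
Proof. intros. clamp_cases; lra. Qed.

Lemma clamp_below s v : 0 < s -> v <= - s -> clamp s v = - s.
Proof. intros. clamp_cases; lra. Qed.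

Lemma clamp_sub_sq_le s a b : 0 < s ->
  (clamp s a - clamp s b) * (clamp s a - clamp s b) <= (a - b) * (clamp s a - clamp s b).
Proof. intros. clamp_cases; nra. Qed.

Lemma clamp_sub_mul_le s a b : 0 < s -> (a - b) * (clamp s a - clamp s b) <= (a - b) * (a - b).
Proof. intros. pose proof (Rle_0_sqr (a - b)). unfold Rsqr in *. clamp_cases; nra. Qed.

Lemma clamp_gap_ge s m vp vq kap : 0 < s -> - s <= m <= s -> vq <= m <= vp ->
  kap * (vp - vq) <= s -> kap * (vp - vq) <= vp - m -> kap * (vp - vq) <= m - vq ->
  kap * (vp - vq) <= clamp s vp - clamp s vq.
Proof. intros. set (g := kap * (vp - vq)) in *. clamp_cases; lra. Qed.

(** * Quadratic forms of a weighted graph *)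

Section GraphForms.

Variables (N : nat) (al : nat -> nat -> R).

Definition laplacian (a : nat -> R) (i : nat) : R := sumN N (fun j => al i j * (a i - a j)).

(* Each edge is counted twice, so [edge_form a b] is twice the Laplacian form [a^T L b]. *)
Definition edge_form (a b : nat -> R) : R :=
  sumN N (fun i => sumN N (fun j => al i j * ((a i - a j) * (b i - b j)))).

Definition edge_energy (a : nat -> R) : R := edge_form a a.

Definition laplacian_sqnorm (a : nat -> R) : R := sumN N (fun i => laplacian a i * laplacian a i).

Definition total_weight : R := sumN N (fun i => sumN N (fun j => al i j)).

Hypothesis al_sym : forall i j, (i < N)%nat -> (j < N)%nat -> al i j = al j i.
Hypothesis al_nonneg : forall i j, (i < N)%nat -> (j < N)%nat -> 0 <= al i j.

Lemma sumN_mul_laplacian c a : sumN N (fun i => c i * laplacian a i) = / 2 * edge_form c a.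
Proof.
  set (G := fun i j => al i j * (c i * (a i - a j))).
  assert (E1 : sumN N (fun i => c i * laplacian a i) = sumN N (fun i => sumN N (fun j => G i j))).
  { apply sumN_ext; intros i Hi. unfold laplacian. rewrite <- sumN_scal.
    apply sumN_ext; intros; unfold G; ring. }
  assert (E2 : edge_form c a
               = sumN N (fun i => sumN N (fun j => G i j)) + sumN N (fun i => sumN N (fun j => G j i))).
  { rewrite <- sumN_add. apply sumN_ext; intros i Hi. rewrite <- sumN_add.
    apply sumN_ext; intros j Hj. unfold G. rewrite (al_sym j i) by auto. ring. }
  rewrite E1, E2, (sumN_swap N N (fun i j => G j i)). field.
Qed.

Lemma sumN_laplacian a : sumN N (fun i => laplacian a i) = 0.
Proof.
  transitivity (sumN N (fun i => 1 * laplacian a i)); [apply sumN_ext; intros; ring|].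
  rewrite sumN_mul_laplacian. unfold edge_form.
  rewrite (sumN_ext _ _ (fun _ => 0)); [rewrite sumN_const; ring|].
  intros. rewrite (sumN_ext _ _ (fun _ => 0)); [rewrite sumN_const; ring|]. intros; ring.
Qed.

Lemma edge_form_sub_const a b m : edge_form (fun i => a i - m) b = edge_form a b.
Proof. apply sumN_ext; intros. apply sumN_ext; intros. ring. Qed.

Lemma edge_form_comm a b : edge_form a b = edge_form b a.
Proof. apply sumN_ext; intros. apply sumN_ext; intros. ring. Qed.

Lemma edge_energy_nonneg a : 0 <= edge_energy a.
Proof.
  apply sumN_nonneg; intros. apply sumN_nonneg; intros.
  apply Rmult_le_pos; [auto| apply Rle_0_sqr].
Qed.

Lemma edge_energy_term_le a i j : (i < N)%nat -> (j < N)%nat ->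
  al i j * ((a i - a j) * (a i - a j)) <= edge_energy a.
Proof.
  intros Hi Hj. unfold edge_energy, edge_form.
  assert (Hterm : forall i j, (i < N)%nat -> (j < N)%nat -> 0 <= al i j * ((a i - a j) * (a i - a j)))
    by (intros; apply Rmult_le_pos; [auto| apply Rle_0_sqr]).
  eapply Rle_trans; [apply (sumN_term_le N (fun j => al i j * ((a i - a j) * (a i - a j)))); auto|].
  apply (sumN_term_le N (fun i => sumN N (fun j => al i j * ((a i - a j) * (a i - a j))))); auto.
  intros; apply sumN_nonneg; auto.
Qed.

Lemma total_weight_nonneg : 0 <= total_weight.
Proof. apply sumN_nonneg; intros; apply sumN_nonneg; auto. Qed.

Lemma row_sum_le_total_weight i : (i < N)%nat -> sumN N (fun j => al i j) <= total_weight.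
Proof.
  intros Hi. apply (sumN_term_le N (fun i => sumN N (fun j => al i j))); auto.
  intros; apply sumN_nonneg; auto.
Qed.

Lemma col_sum_le_total_weight j : (j < N)%nat -> sumN N (fun i => al i j) <= total_weight.
Proof.
  intros Hj. unfold total_weight. rewrite sumN_swap.
  apply (sumN_term_le N (fun j => sumN N (fun i => al i j))); auto.
  intros; apply sumN_nonneg; auto.
Qed.

Lemma edge_energy_le_variance a m :
  edge_energy a <= 4 * total_weight * sumN N (fun i => (a i - m) * (a i - m)).
Proof.
  set (d := fun i => (a i - m) * (a i - m)).
  apply Rle_trans with (sumN N (fun i => sumN N (fun j => 2 * (d i * al i j) + 2 * (d j * al i j)))).
  { apply sumN_le; intros i Hi; apply sumN_le; intros j Hj.
    pose proof (al_nonneg i j Hi Hj). pose proof (Rle_0_sqr ((a i - m) + (a j - m))).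
    unfold Rsqr, d in *. nra. }
  rewrite (sumN_ext _ _ (fun i => 2 * (d i * sumN N (fun j => al i j))
                                + 2 * sumN N (fun j => d j * al i j)))
    by (intros; rewrite sumN_add, !sumN_scal; reflexivity).
  rewrite sumN_add, !sumN_scal, (sumN_swap N N (fun i j => d j * al i j)).
  rewrite (sumN_ext N (fun j => sumN N (fun i => d j * al i j)) (fun j => d j * sumN N (fun i => al i j)))
    by (intros; apply sumN_scal).
  assert (Hd : forall i, 0 <= d i) by (intros; apply Rle_0_sqr).
  assert (sumN N (fun i => d i * sumN N (fun j => al i j)) <= total_weight * sumN N d).
  { rewrite <- sumN_scal. apply sumN_le; intros i Hi. rewrite Rmult_comm.
    apply Rmult_le_compat_r; auto. apply row_sum_le_total_weight; auto. }
  assert (sumN N (fun j => d j * sumN N (fun i => al i j)) <= total_weight * sumN N d).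
  { rewrite <- sumN_scal. apply sumN_le; intros j Hj. rewrite Rmult_comm.
    apply Rmult_le_compat_r; auto. apply col_sum_le_total_weight; auto. }
  lra.
Qed.

Lemma laplacian_sqnorm_le a : laplacian_sqnorm a <= total_weight * edge_energy a.
Proof.
  unfold laplacian_sqnorm, edge_energy, edge_form. rewrite <- sumN_scal. apply sumN_le; intros i Hi.
  eapply Rle_trans; [apply (sumN_cauchy_schwarz N (fun j => al i j) (fun j => a i - a j)); auto|].
  apply Rmult_le_compat_r; [|apply row_sum_le_total_weight; auto].
  apply sumN_nonneg; intros. apply Rmult_le_pos; [auto| apply Rle_0_sqr].
Qed.

Lemma walk_sq_le i j : walk N al i j ->
  exists C, 0 < C /\ forall a, (a i - a j) * (a i - a j) <= C * edge_energy a.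
Proof.
  induction 1 as [i Hi| i k j Hi Hk Hik _ [C [HC HCa]]].
  - exists 1. split; [lra|]. intros a. pose proof (edge_energy_nonneg a). nra.
  - exists (2 / al i k + 2 * C). split.
    { assert (0 < 2 / al i k) by (apply Rdiv_lt_0_compat; lra). lra. }
    intros a. pose proof (HCa a). pose proof (edge_energy_term_le a i k Hi Hk).
    assert (Hstep : (a i - a k) * (a i - a k) <= / al i k * edge_energy a).
    { apply Rmult_le_reg_l with (al i k); auto. 
      replace (al i k * (/ al i k * edge_energy a)) with (edge_energy a) by (field; lra). lra. }
    pose proof (Rle_0_sqr ((a i - a k) - (a k - a j))). unfold Rdiv, Rsqr in *. nra.
Qed.

Lemma connected_sq_le : connected_graph N al ->
  exists C, 0 < C /\ forall a i j, (i < N)%nat -> (j < N)%nat ->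
    (a i - a j) * (a i - a j) <= C * edge_energy a.
Proof.
  intros Hconn.
  assert (Hmono : forall (u : R) (b c : R), 0 <= u -> b <= c -> b * u <= c * u)
    by (intros; apply Rmult_le_compat_r; auto).
  destruct (common_threshold N (fun i C => forall a j, (j < N)%nat ->
              (a i - a j) * (a i - a j) <= C * edge_energy a) 1) as [C [HC HCa]].
  - intros k b c Hb Hbc a j Hj. eapply Rle_trans; [apply Hb; auto|].
    apply Hmono; auto using edge_energy_nonneg.
  - intros i Hi.
    destruct (common_threshold N (fun j C => forall a,
                (a i - a j) * (a i - a j) <= C * edge_energy a) 1) as [C [_ HCa]].
    + intros k b c Hb Hbc a. eapply Rle_trans; [apply Hb|].
      apply Hmono; auto using edge_energy_nonneg.
    + intros j Hj. destruct (walk_sq_le i j (Hconn i j Hi Hj)) as [C [_ HCa]]. now exists C.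
    + exists C. auto.
  - exists C. split; [lra| auto].
Qed.

(* Discrete Poincare inequality: test the Laplacian against [a - a 0] and absorb with Young. *)
Lemma edge_energy_le_laplacian_sq C : (0 < N)%nat -> 0 < C ->
  (forall a i j, (i < N)%nat -> (j < N)%nat -> (a i - a j) * (a i - a j) <= C * edge_energy a) ->
  forall a, edge_energy a <= 4 * INR N * C * laplacian_sqnorm a.
Proof.
  intros HN HC HCa a.
  assert (HNr : 0 < INR N) by (apply lt_0_INR; auto).
  set (K := INR N * C). assert (HK : 0 < K) by (unfold K; nra).
  set (b := fun i => a i - a 0%nat).
  assert (E : sumN N (fun i => b i * laplacian a i) = / 2 * edge_energy a).
  { unfold b. rewrite (sumN_ext _ _ (fun i => a i * laplacian a i - a 0%nat * laplacian a i))
      by (intros; ring).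
    rewrite sumN_sub, sumN_scal, sumN_laplacian, sumN_mul_laplacian. unfold edge_energy. ring. }
  assert (Hyoung : sumN N (fun i => b i * laplacian a i)
       <= sumN N (fun i => / (4 * K) * (b i * b i) + K * (laplacian a i * laplacian a i))).
  { apply sumN_le; intros i Hi.
    pose proof (Rle_0_sqr (b i - 2 * K * laplacian a i)). unfold Rsqr in *.
    apply Rmult_le_reg_l with (4 * K); [lra|].
    replace (4 * K * (/ (4 * K) * (b i * b i) + K * (laplacian a i * laplacian a i)))
      with (b i * b i + 4 * K * K * (laplacian a i * laplacian a i)) by (field; lra). nra. }
  assert (Hb : sumN N (fun i => b i * b i) <= K * edge_energy a).
  { unfold K. rewrite Rmult_assoc, <- sumN_const. apply sumN_le; intros i Hi. apply HCa; auto. }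
  rewrite sumN_add, !sumN_scal in Hyoung.
  assert (/ (4 * K) * sumN N (fun i => b i * b i) <= / 4 * edge_energy a).
  { apply Rle_trans with (/ (4 * K) * (K * edge_energy a)).
    - apply Rmult_le_compat_l; [left; apply Rinv_0_lt_compat; lra| auto].
    - right. field. lra. }
  unfold K, laplacian_sqnorm in *. lra.
Qed.

Lemma edge_energy_clamp_le s a : 0 < s ->
  edge_energy (fun i => clamp s (a i)) <= edge_form a (fun i => clamp s (a i)).
Proof.
  intros Hs. apply sumN_le; intros i Hi; apply sumN_le; intros j Hj.
  apply Rmult_le_compat_l; auto. apply clamp_sub_sq_le; auto.
Qed.

Lemma edge_form_clamp_le s a : 0 < s -> edge_form a (fun i => clamp s (a i)) <= edge_energy a.
Proof.
  intros Hs. apply sumN_le; intros i Hi; apply sumN_le; intros j Hj.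
  apply Rmult_le_compat_l; auto. apply clamp_sub_mul_le; auto.
Qed.

Lemma variance_le_edge_energy_clamp s v m B C kap : (0 < N)%nat -> 0 < s -> - s <= m <= s ->
  sumN N (fun i => v i - m) = 0 -> (forall i, (i < N)%nat -> Rabs (v i - m) <= B) ->
  (forall a i j, (i < N)%nat -> (j < N)%nat -> (a i - a j) * (a i - a j) <= C * edge_energy a) ->
  0 < kap -> kap <= / INR N -> kap * (2 * B) <= s ->
  kap * kap * sumN N (fun i => (v i - m) * (v i - m))
  <= INR N * C * edge_energy (fun i => clamp s (v i)).
Proof.
  intros HN Hs Hm Hsum HB HCa Hk HkN HkB.
  assert (HNr : 0 < INR N) by (apply lt_0_INR; auto).
  destruct (zero_sum_extremes N (fun i => v i - m) HN Hsum)
    as [p [q [Hp [Hq [Hbetween [Hvar [Hdp Hdq]]]]]]].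
  set (d := v p - v q). replace (v p - m - (v q - m)) with d in * by (unfold d; ring).
  pose proof (Hbetween p Hp). pose proof (Rabs_le_bounds _ _ (HB p Hp)).
  pose proof (Rabs_le_bounds _ _ (HB q Hq)).
  assert (HkdN : kap * d <= d / INR N).
  { unfold Rdiv. rewrite Rmult_comm. apply Rmult_le_compat_l; [unfold d; lra| auto]. }
  assert (0 <= d / INR N) by (unfold Rdiv, d; apply Rmult_le_pos; [lra| left; apply Rinv_0_lt_compat; lra]).
  assert (d / INR N <= v p - m) by (apply Rmult_le_reg_l with (INR N); [lra|]; field_simplify; lra).
  assert (d / INR N <= m - v q) by (apply Rmult_le_reg_l with (INR N); [lra|]; field_simplify; lra).
  assert (kap * d <= s) by (apply Rle_trans with (kap * (2 * B)); [apply Rmult_le_compat_l; unfold d|]; lra).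
  assert (Hgap : kap * d <= clamp s (v p) - clamp s (v q)) by (apply (clamp_gap_ge s m); unfold d in *; lra).
  assert (Hg : (clamp s (v p) - clamp s (v q)) * (clamp s (v p) - clamp s (v q))
               <= C * edge_energy (fun i => clamp s (v i)))
    by apply (HCa (fun i => clamp s (v i)) p q Hp Hq).
  assert (0 <= kap * d) by (unfold d; nra).
  assert (kap * d * (kap * d) <= C * edge_energy (fun i => clamp s (v i))) by nra.
  apply Rle_trans with (kap * kap * (INR N * (d * d))).
  - apply Rmult_le_compat_l; [nra| exact Hvar].
  - replace (kap * kap * (INR N * (d * d))) with (INR N * (kap * d * (kap * d))) by ring.
    rewrite (Rmult_assoc (INR N) C). apply Rmult_le_compat_l; lra.
Qed.

Lemma derivable_pt_lim_laplacian (a a' : nat -> R -> R) t :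
  (forall i, (i < N)%nat -> derivable_pt_lim (a i) t (a' i t)) ->
  forall i, (i < N)%nat ->
  derivable_pt_lim (fun u => laplacian (fun k => a k u) i) t (laplacian (fun k => a' k t) i).
Proof.
  intros Ha i Hi. apply (derivable_pt_lim_sumN N (fun j u => al i j * (a i u - a j u))).
  intros j Hj. apply derivable_pt_lim_scal, derivable_pt_lim_minus; auto.
Qed.

Lemma derivable_pt_lim_edge_energy (a a' : nat -> R -> R) t :
  (forall i, (i < N)%nat -> derivable_pt_lim (a i) t (a' i t)) ->
  derivable_pt_lim (fun u => edge_energy (fun k => a k u)) t
    (2 * edge_form (fun k => a k t) (fun k => a' k t)).
Proof.
  intros Ha. unfold edge_form. rewrite <- sumN_scal.
  apply (derivable_pt_lim_sumN N (fun i u => sumN N (fun j => al i j * ((a i u - a j u) * (a i u - a j u))))).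
  intros i Hi. rewrite <- sumN_scal.
  apply (derivable_pt_lim_sumN N (fun j u => al i j * ((a i u - a j u) * (a i u - a j u)))).
  intros j Hj.
  replace (2 * (al i j * ((a i t - a j t) * (a' i t - a' j t))))
    with (al i j * ((a' i t - a' j t) * (a i t - a j t) + (a i t - a j t) * (a' i t - a' j t))) by ring.
  apply derivable_pt_lim_scal.
  apply (derivable_pt_lim_mult (fun u => a i u - a j u) (fun u => a i u - a j u));
    apply derivable_pt_lim_minus; auto.
Qed.

End GraphForms.

(** * The closed-loop dynamics *)

Section Dynamics.

Variables (N : nat) (al : nat -> nat -> R) (s t0 : R) (x v : nat -> R -> R).

Hypothesis al_sym : forall i j, (i < N)%nat -> (j < N)%nat -> al i j = al j i.
Hypothesis al_nonneg : forall i j, (i < N)%nat -> (j < N)%nat -> 0 <= al i j.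
Hypothesis s_pos : 0 < s.
Hypothesis x_deriv : forall i t, (i < N)%nat -> t0 <= t -> derivable_pt_lim (x i) t (v i t).

Definition force (i : nat) (t : R) : R :=
  sumN N (fun j => al i j * ((x j t - x i t) + (sat s (v j t) - sat s (v i t)))).

Hypothesis v_deriv : forall i t, (i < N)%nat -> t0 <= t -> derivable_pt_lim (v i) t (force i t).

Lemma force_eq i t : force i t
  = - laplacian N al (fun k => x k t) i - laplacian N al (fun k => clamp s (v k t)) i.
Proof.
  unfold force, laplacian.
  transitivity (sumN N (fun j => -1 * (al i j * (x i t - x j t))
                                 - al i j * (clamp s (v i t) - clamp s (v j t)))).
  - apply sumN_ext; intros. rewrite !sat_eq_clamp by auto. ring.
  - rewrite sumN_sub, sumN_scal. ring.
Qed.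

Lemma sumN_force t : sumN N (fun i => force i t) = 0.
Proof.
  rewrite (sumN_ext _ _ (fun i => - laplacian N al (fun k => x k t) i
                                  - laplacian N al (fun k => clamp s (v k t)) i))
    by (intros; apply force_eq).
  rewrite sumN_sub.
  rewrite (sumN_ext N (fun i => - laplacian N al (fun k => x k t) i)
             (fun i => -1 * laplacian N al (fun k => x k t) i)) by (intros; ring).
  rewrite sumN_scal, !sumN_laplacian by auto. ring.
Qed.

Lemma velocity_sum_const t : t0 <= t -> sumN N (fun i => v i t) = sumN N (fun i => v i t0).
Proof.
  intros Ht.
  assert (Hd : forall c, forall u, t0 <= u ->
            derivable_pt_lim (fun u => c * sumN N (fun i => v i u)) u 0).
  { intros c u Hu. replace 0 with (c * sumN N (fun i => force i u)) by (rewrite sumN_force; ring).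
    apply derivable_pt_lim_scal, derivable_pt_lim_sumN. auto. }
  pose proof (nonincreasing_of_derive_nonpos _ _ t0 (Hd 1) (fun _ _ => Rle_refl 0) t0 t (Rle_refl _) Ht).
  pose proof (nonincreasing_of_derive_nonpos _ _ t0 (Hd (-1)) (fun _ _ => Rle_refl 0) t0 t (Rle_refl _) Ht).
  simpl in *. lra.
Qed.

Variable m : R.
Hypothesis mean_init : sumN N (fun i => v i t0) = INR N * m.

Lemma sumN_velocity_dev t : t0 <= t -> sumN N (fun i => v i t - m) = 0.
Proof. intros Ht. rewrite sumN_sub, sumN_const, velocity_sum_const, mean_init by auto. ring. Qed.

Definition velocity_dev_sumsq (t : R) : R := sumN N (fun i => (v i t - m) * (v i t - m)).

Definition energy (t : R) : R :=
  / 4 * edge_energy N al (fun i => x i t) + / 2 * velocity_dev_sumsq t.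

Definition dissipation (t : R) : R :=
  edge_form N al (fun i => v i t) (fun i => clamp s (v i t)).

Lemma velocity_dev_sumsq_nonneg t : 0 <= velocity_dev_sumsq t.
Proof. apply sumN_nonneg; intros; apply Rle_0_sqr. Qed.

Lemma velocity_dev_sq_le i t : (i < N)%nat -> (v i t - m) * (v i t - m) <= velocity_dev_sumsq t.
Proof.
  intros Hi. apply (sumN_term_le N (fun i => (v i t - m) * (v i t - m))); auto.
  intros; apply Rle_0_sqr.
Qed.

Lemma energy_nonneg t : 0 <= energy t.
Proof.
  pose proof (edge_energy_nonneg N al al_nonneg (fun i => x i t)).
  pose proof (velocity_dev_sumsq_nonneg t). unfold energy. lra.
Qed.

Lemma dissipation_ge t : edge_energy N al (fun i => clamp s (v i t)) <= dissipation t.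
Proof. apply edge_energy_clamp_le; auto. Qed.

Lemma energy_derivative t : t0 <= t -> derivable_pt_lim energy t (- / 2 * dissipation t).
Proof.
  intros Ht.
  assert (Hx : derivable_pt_lim (fun u => edge_energy N al (fun i => x i u)) t
                 (2 * edge_form N al (fun i => x i t) (fun i => v i t)))
    by (apply (derivable_pt_lim_edge_energy N al x v); auto).
  assert (Hv : derivable_pt_lim velocity_dev_sumsq t
                 (sumN N (fun i => 2 * ((v i t - m) * force i t)))).
  { unfold velocity_dev_sumsq.
    apply (derivable_pt_lim_sumN N (fun i u => (v i u - m) * (v i u - m))). intros i Hi.
    replace (2 * ((v i t - m) * force i t))
      with ((force i t - 0) * (v i t - m) + (v i t - m) * (force i t - 0)) by ring.
    apply (derivable_pt_lim_mult (fun u => v i u - m) (fun u => v i u - m));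
      (apply derivable_pt_lim_minus; [apply v_deriv; auto| apply derivable_pt_lim_const]). }
  replace (- / 2 * dissipation t)
    with (/ 4 * (2 * edge_form N al (fun i => x i t) (fun i => v i t))
          + / 2 * sumN N (fun i => 2 * ((v i t - m) * force i t))).
  { unfold energy. apply derivable_pt_lim_plus; apply derivable_pt_lim_scal; auto. }
  rewrite sumN_scal.
  rewrite (sumN_ext _ _ (fun i => -1 * ((fun k => v k t - m) i * laplacian N al (fun k => x k t) i)
        + -1 * ((fun k => v k t - m) i * laplacian N al (fun k => clamp s (v k t)) i)))
    by (intros; rewrite force_eq; ring).
  rewrite sumN_add, !sumN_scal, !sumN_mul_laplacian, !edge_form_sub_const by auto.
  rewrite (edge_form_comm N al (fun k => x k t)). unfold dissipation. lra.
Qed.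

Lemma energy_nonincreasing t1 t2 : t0 <= t1 -> t1 <= t2 -> energy t2 <= energy t1.
Proof.
  apply (nonincreasing_of_derive_nonpos energy (fun t => - / 2 * dissipation t) t0).
  - apply energy_derivative.
  - intros t _. pose proof (dissipation_ge t).
    pose proof (edge_energy_nonneg N al al_nonneg (fun i => clamp s (v i t))). lra.
Qed.

Lemma energy_rate_ge t : - (4 * total_weight N al) * energy t <= - / 2 * dissipation t.
Proof.
  pose proof (edge_form_clamp_le N al al_nonneg s (fun i => v i t) s_pos).
  pose proof (edge_energy_le_variance N al al_nonneg (fun i => v i t) m).
  pose proof (edge_energy_nonneg N al al_nonneg (fun i => x i t)).
  pose proof (total_weight_nonneg N al al_nonneg).
  unfold energy, dissipation, velocity_dev_sumsq in *. nra.
Qed.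

Lemma consensus_gap_sq_le_energy : connected_graph N al ->
  exists C, 0 < C /\ forall t i j, (i < N)%nat -> (j < N)%nat ->
    (x i t - x j t) * (x i t - x j t) <= C * energy t /\
    (v i t - v j t) * (v i t - v j t) <= C * energy t.
Proof.
  intros Hconn. destruct (connected_sq_le N al al_nonneg Hconn) as [C [HC HCa]].
  exists (4 * C + 8). split; [lra|]. intros t i j Hi Hj.
  pose proof (HCa (fun k => x k t) i j Hi Hj). pose proof (energy_nonneg t).
  pose proof (edge_energy_nonneg N al al_nonneg (fun k => x k t)).
  pose proof (velocity_dev_sumsq_nonneg t).
  pose proof (velocity_dev_sq_le i t Hi). pose proof (velocity_dev_sq_le j t Hj).
  pose proof (Rle_0_sqr ((v i t - m) + (v j t - m))). unfold energy, Rsqr in *.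
  split; nra.
Qed.

Lemma consensus_of_energy_zero t : connected_graph N al -> energy t = 0 ->
  forall i j, (i < N)%nat -> (j < N)%nat -> x i t = x j t /\ v i t = v j t.
Proof.
  intros Hconn HW i j Hi Hj.
  destruct (consensus_gap_sq_le_energy Hconn) as [C [_ Hgap]].
  destruct (Hgap t i j Hi Hj) as [Hx Hv]. rewrite HW, Rmult_0_r in Hx, Hv.
  pose proof (Rle_0_sqr (x i t - x j t)). pose proof (Rle_0_sqr (v i t - v j t)). unfold Rsqr in *.
  split; apply Rminus_diag_uniq, Rsqr_0_uniq; unfold Rsqr; lra.
Qed.

(* Backward uniqueness: [energy' >= -4 A energy], so [energy t * exp (4 A t)] is nondecreasing. *)
Lemma energy_zero_backward T : t0 <= T -> energy T = 0 -> energy t0 = 0.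
Proof.
  intros HT HW.
  set (lam := 4 * total_weight N al).
  pose proof (exp_weighted_nonincreasing (fun t => - energy t) (fun t => - (- / 2 * dissipation t))
                lam t0) as Hmono.
  assert (Hle : - energy T * exp (lam * T) <= - energy t0 * exp (lam * t0)).
  { apply Hmono; auto using Rle_refl.
    - intros t Ht. apply derivable_pt_lim_opp, energy_derivative; auto.
    - intros t _. pose proof (energy_rate_ge t). unfold lam. lra. }
  rewrite HW in Hle. pose proof (exp_pos (lam * t0)). pose proof (energy_nonneg t0).
  assert (energy t0 * exp (lam * t0) <= 0) by lra.
  assert (0 <= energy t0 * exp (lam * t0)) by (apply Rmult_le_pos; lra). nra.
Qed.

Section MeanUnsaturated.

Hypothesis N_pos : (0 < N)%nat.
Hypothesis graph_connected : connected_graph N al.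
Hypothesis mean_unsaturated : - s <= m <= s.

Definition cross (t : R) : R := sumN N (fun i => (v i t - m) * laplacian N al (fun k => x k t) i).

Definition cross_rate (t : R) : R :=
  sumN N (fun i => force i t * laplacian N al (fun k => x k t) i
                   + (v i t - m) * laplacian N al (fun k => v k t) i).

Lemma cross_derivative t : t0 <= t -> derivable_pt_lim cross t (cross_rate t).
Proof.
  intros Ht. apply (derivable_pt_lim_sumN N (fun i u => (v i u - m) * laplacian N al (fun k => x k u) i)).
  intros i Hi.
  replace (force i t * laplacian N al (fun k => x k t) i + (v i t - m) * laplacian N al (fun k => v k t) i)
    with ((force i t - 0) * laplacian N al (fun k => x k t) i
          + (v i t - m) * laplacian N al (fun k => v k t) i) by ring.
  apply (derivable_pt_lim_mult (fun u => v i u - m) (fun u => laplacian N al (fun k => x k u) i)).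
  - apply derivable_pt_lim_minus; [auto| apply derivable_pt_lim_const].
  - apply (derivable_pt_lim_laplacian N al x v); auto.
Qed.

Lemma cross_rate_le t : cross_rate t <=
  - / 2 * laplacian_sqnorm N al (fun k => x k t)
  + / 2 * laplacian_sqnorm N al (fun k => clamp s (v k t)) + / 2 * edge_energy N al (fun k => v k t).
Proof.
  unfold cross_rate. rewrite sumN_add.
  rewrite (sumN_mul_laplacian N al al_sym (fun k => v k t - m)), edge_form_sub_const.
  assert (sumN N (fun i => force i t * laplacian N al (fun k => x k t) i)
          <= - / 2 * laplacian_sqnorm N al (fun k => x k t)
             + / 2 * laplacian_sqnorm N al (fun k => clamp s (v k t))).
  { unfold laplacian_sqnorm. rewrite <- !sumN_scal, <- sumN_add. apply sumN_le; intros i Hi.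
    rewrite force_eq.
    pose proof (Rle_0_sqr (laplacian N al (fun k => x k t) i
                           + laplacian N al (fun k => clamp s (v k t)) i)).
    unfold Rsqr in *. nra. }
  unfold edge_energy. lra.
Qed.

Lemma cross_abs_le t :
  Rabs (cross t) <= / 2 * velocity_dev_sumsq t + / 2 * laplacian_sqnorm N al (fun k => x k t).
Proof.
  unfold cross, velocity_dev_sumsq, laplacian_sqnorm.
  rewrite <- !sumN_scal, <- sumN_add. eapply Rle_trans; [apply Rabs_sumN_le|].
  apply sumN_le; intros i Hi. apply Rabs_le.
  pose proof (Rle_0_sqr ((v i t - m) + laplacian N al (fun k => x k t) i)).
  pose proof (Rle_0_sqr ((v i t - m) - laplacian N al (fun k => x k t) i)).
  unfold Rsqr in *. split; nra.
Qed.

Lemma velocity_dev_abs_le i t : (i < N)%nat -> t0 <= t -> Rabs (v i t - m) <= 1 + 2 * energy t0.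
Proof.
  intros Hi Ht. pose proof (velocity_dev_sq_le i t Hi).
  pose proof (energy_nonincreasing t0 t (Rle_refl t0) Ht). pose proof (energy_nonneg t0).
  pose proof (edge_energy_nonneg N al al_nonneg (fun k => x k t)).
  assert (Hsq : (v i t - m) * (v i t - m) <= 2 * energy t0) by (unfold energy in *; lra).
  rewrite <- (Rabs_right ((v i t - m) * (v i t - m))), Rabs_mult in Hsq
    by (apply Rle_ge, Rle_0_sqr).
  destruct (Rle_dec (Rabs (v i t - m)) 1) as [|Hgt%Rnot_le_lt]; [lra|].
  assert (Rabs (v i t - m) <= Rabs (v i t - m) * Rabs (v i t - m)) by nra.
  lra.
Qed.

Lemma velocity_dev_sumsq_le_clamp_energy :
  exists Kd, 0 < Kd /\ forall t, t0 <= t ->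
    velocity_dev_sumsq t <= Kd * edge_energy N al (fun i => clamp s (v i t)).
Proof.
  destruct (connected_sq_le N al al_nonneg graph_connected) as [C [HC HCa]].
  assert (HNr : 0 < INR N) by (apply lt_0_INR; auto).
  set (B := 1 + 2 * energy t0). assert (HB : 1 <= B) by (pose proof (energy_nonneg t0); unfold B; lra).
  set (kap := Rmin (/ INR N) (s / (2 * B))).
  assert (Hk : 0 < kap) by (apply Rmin_pos; [apply Rinv_0_lt_compat| apply Rdiv_lt_0_compat]; lra).
  assert (HkB : kap * (2 * B) <= s).
  { apply Rle_trans with (s / (2 * B) * (2 * B)); [apply Rmult_le_compat_r; [lra| apply Rmin_r]|].
    right. field. lra. }
  exists (INR N * C / (kap * kap)). split; [apply Rdiv_lt_0_compat; nra|]. intros t Ht.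
  pose proof (variance_le_edge_energy_clamp N al s (fun i => v i t) m B C kap
                N_pos s_pos mean_unsaturated (sumN_velocity_dev t Ht)
                (fun i Hi => velocity_dev_abs_le i t Hi Ht) HCa Hk (Rmin_l _ _) HkB) as Hvar.
  apply Rmult_le_reg_l with (kap * kap); [nra|].
  replace (kap * kap * (INR N * C / (kap * kap) * edge_energy N al (fun i => clamp s (v i t))))
    with (INR N * C * edge_energy N al (fun i => clamp s (v i t))) by (field; lra).
  exact Hvar.
Qed.

(* Uniform comparisons, along the trajectory, between the quadratic quantities entering the
   derivative of the perturbed energy. *)
Definition comparison_bounds (K t : R) : Prop :=
  velocity_dev_sumsq t <= K * edge_energy N al (fun i => clamp s (v i t)) /\
  laplacian_sqnorm N al (fun i => clamp s (v i t)) <= K * edge_energy N al (fun i => clamp s (v i t)) /\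
  edge_energy N al (fun i => v i t) <= K * velocity_dev_sumsq t /\
  edge_energy N al (fun i => x i t) <= K * laplacian_sqnorm N al (fun i => x i t) /\
  laplacian_sqnorm N al (fun i => x i t) <= K * edge_energy N al (fun i => x i t).

Lemma comparison_bounds_exist : exists K, 1 <= K /\ forall t, t0 <= t -> comparison_bounds K t.
Proof.
  destruct velocity_dev_sumsq_le_clamp_energy as [Kd [HKd HKda]].
  destruct (connected_sq_le N al al_nonneg graph_connected) as [C [HC HCa]].
  pose proof (total_weight_nonneg N al al_nonneg) as HA.
  assert (HNr : 0 < INR N) by (apply lt_0_INR; auto).
  assert (0 <= 4 * INR N * C) by nra.
  set (K := 1 + 4 * total_weight N al + Kd + 4 * INR N * C).
  assert (Hweaken : forall c q, 0 <= q -> c <= K -> c * q <= K * q)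
    by (intros; apply Rmult_le_compat_r; auto).
  exists K. split; [unfold K; lra|]. intros t Ht.
  pose proof (edge_energy_nonneg N al al_nonneg (fun i => clamp s (v i t))) as Hy.
  pose proof (edge_energy_nonneg N al al_nonneg (fun i => x i t)) as Hx.
  assert (Hlx : 0 <= laplacian_sqnorm N al (fun i => x i t))
    by (apply sumN_nonneg; intros; apply Rle_0_sqr).
  pose proof (velocity_dev_sumsq_nonneg t) as Hvv.
  repeat split.
  - eapply Rle_trans; [apply HKda; auto| apply Hweaken; auto; unfold K; lra].
  - eapply Rle_trans; [apply laplacian_sqnorm_le; auto| apply Hweaken; auto; unfold K; lra].
  - eapply Rle_trans; [apply (edge_energy_le_variance N al al_nonneg _ m)|].
    apply Hweaken; auto. unfold K; lra.
  - eapply Rle_trans; [apply (edge_energy_le_laplacian_sq N al al_sym C); auto|].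
    apply Hweaken; auto. unfold K; lra.
  - eapply Rle_trans; [apply laplacian_sqnorm_le; auto| apply Hweaken; auto; unfold K; lra].
Qed.

(* The perturbation weight [eps] is small enough to keep [energy + eps * cross] equivalent to
   [energy] and to let the good term [- eps / 2 * laplacian_sqnorm x] dominate. *)
Let eps (K : R) : R := / (10 * (K * K)).

Lemma eps_bounds K : 1 <= K ->
  0 < eps K /\ eps K <= / 10 /\ eps K * K <= / 10 /\ eps K * K * K = / 10.
Proof.
  intros HK. assert (He : 0 < eps K) by (unfold eps; apply Rinv_0_lt_compat; nra).
  assert (HeKK : eps K * K * K = / 10) by (unfold eps; field; lra).
  assert (eps K * K * 1 <= eps K * K * K) by (apply Rmult_le_compat_l; nra).
  assert (eps K * 1 <= eps K * K) by (apply Rmult_le_compat_l; lra).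
  repeat split; lra.
Qed.

Lemma perturbed_energy_equiv K t : 1 <= K -> comparison_bounds K t ->
  / 2 * energy t <= energy t + eps K * cross t <= 3 / 2 * energy t.
Proof.
  intros HK (_ & _ & _ & _ & Hlx). destruct (eps_bounds K HK) as (He & He10 & HeK & _).
  pose proof (edge_energy_nonneg N al al_nonneg (fun i => x i t)).
  pose proof (velocity_dev_sumsq_nonneg t).
  assert (Hcross : eps K * Rabs (cross t)
                   <= / 20 * velocity_dev_sumsq t + / 20 * edge_energy N al (fun i => x i t)).
  { apply Rle_trans with (eps K * (/ 2 * velocity_dev_sumsq t
                                   + / 2 * (K * edge_energy N al (fun i => x i t)))).
    { apply Rmult_le_compat_l; [lra|]. pose proof (cross_abs_le t). lra. }
    assert (eps K * velocity_dev_sumsq t <= / 10 * velocity_dev_sumsq t)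
      by (apply Rmult_le_compat_r; lra).
    assert (eps K * K * edge_energy N al (fun i => x i t) <= / 10 * edge_energy N al (fun i => x i t))
      by (apply Rmult_le_compat_r; lra).
    lra. }
  assert (eps K * cross t <= eps K * Rabs (cross t))
    by (apply Rmult_le_compat_l; [lra| apply Rle_abs]).
  assert (eps K * - Rabs (cross t) <= eps K * cross t).
  { apply Rmult_le_compat_l; [lra|].
    pose proof (Rle_abs (- cross t)). rewrite Rabs_Ropp in *. lra. }
  unfold energy. lra.
Qed.

Lemma perturbed_energy_rate_le K t : 1 <= K -> comparison_bounds K t ->
  - / 2 * dissipation t + eps K * cross_rate t <= - (eps K / K) * energy t.
Proof.
  intros HK (Hvv & Hly & Hqv & Hqx & _). destruct (eps_bounds K HK) as (He & He10 & HeK & HeKK).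
  set (a := edge_energy N al (fun i => clamp s (v i t))) in *.
  set (lx := laplacian_sqnorm N al (fun i => x i t)) in *.
  assert (Ha : 0 <= a) by apply edge_energy_nonneg, al_nonneg.
  assert (Hlx : 0 <= lx) by (apply sumN_nonneg; intros; apply Rle_0_sqr).
  pose proof (dissipation_ge t) as HD. fold a in HD.
  assert (Hrate : eps K * cross_rate t
                  <= eps K * (- / 2 * lx + / 2 * (K * a) + / 2 * (K * (K * a)))).
  { apply Rmult_le_compat_l; [lra|]. pose proof (cross_rate_le t) as Hcr. fold lx in Hcr.
    assert (K * velocity_dev_sumsq t <= K * (K * a)) by (apply Rmult_le_compat_l; lra). lra. }
  assert (eps K * K * a <= / 10 * a) by (apply Rmult_le_compat_r; lra).
  assert (Henergy : eps K / K * energy t <= eps K / K * (K * (/ 4 * lx + / 2 * a))).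
  { apply Rmult_le_compat_l; [left; apply Rdiv_lt_0_compat; lra|]. unfold energy. lra. }
  replace (eps K / K * (K * (/ 4 * lx + / 2 * a))) with (eps K * (/ 4 * lx + / 2 * a))
    in Henergy by (field; lra).
  assert (eps K * a <= / 10 * a) by (apply Rmult_le_compat_r; lra).
  assert (0 <= eps K * lx) by (apply Rmult_le_pos; lra).
  replace (eps K * (- / 2 * lx + / 2 * (K * a) + / 2 * (K * (K * a))))
    with (- / 2 * (eps K * lx) + / 2 * (eps K * K * a) + / 2 * (eps K * K * K * a)) in Hrate by ring.
  rewrite HeKK in Hrate. lra.
Qed.

Lemma energy_le_inv_linear :
  exists c lam, 0 < lam /\ forall t, t0 <= t -> energy t <= c / (1 + lam * (t - t0)).
Proof.
  destruct comparison_bounds_exist as [K [HK HKb]].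
  destruct (eps_bounds K HK) as [He _].
  set (k := eps K / K). assert (Hk : 0 < k) by (apply Rdiv_lt_0_compat; lra).
  set (U := fun t => energy t + eps K * cross t).
  set (U' := fun t => - / 2 * dissipation t + eps K * cross_rate t).
  assert (HU : forall t, t0 <= t -> derivable_pt_lim U t (U' t)).
  { intros t Ht. apply derivable_pt_lim_plus;
      [apply energy_derivative| apply derivable_pt_lim_scal, cross_derivative]; auto. }
  assert (HUW : forall t, t0 <= t -> / 2 * energy t <= U t <= 3 / 2 * energy t)
    by (intros; apply perturbed_energy_equiv; auto).
  assert (HU' : forall t, t0 <= t -> U' t <= - (2 / 3 * k) * U t).
  { intros t Ht. pose proof (perturbed_energy_rate_le K t HK (HKb t Ht)). pose proof (HUW t Ht).
    assert (k * U t <= k * (3 / 2 * energy t)) by (apply Rmult_le_compat_l; lra).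
    unfold U', k in *. lra. }
  assert (HU0 : 0 <= U t0) by (pose proof (energy_nonneg t0); pose proof (HUW t0 (Rle_refl _)); lra).
  exists (2 * U t0), (2 / 3 * k). split; [lra|]. intros t Ht.
  pose proof (le_inv_linear_of_derive_le U U' (2 / 3 * k) t0 ltac:(lra) HU0 HU HU' t Ht).
  pose proof (HUW t Ht). unfold Rdiv in *. lra.
Qed.

Lemma consensus_of_mean_unsaturated i j : (i < N)%nat -> (j < N)%nat ->
  tends_to_0_at_infty (fun t => x i t - x j t) /\ tends_to_0_at_infty (fun t => v i t - v j t).
Proof.
  intros Hi Hj.
  destruct (consensus_gap_sq_le_energy graph_connected) as [C [HC Hgap]].
  destruct energy_le_inv_linear as [c [lam [Hlam Hdecay]]].
  assert (HCW : forall t, t0 <= t -> C * energy t <= C * c / (1 + lam * (t - t0))).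
  { intros t Ht. unfold Rdiv. rewrite Rmult_assoc.
    apply Rmult_le_compat_l; [lra| apply Hdecay; auto]. }
  split; apply (tends_to_0_of_sq_le_inv_linear _ t0 (C * c) lam Hlam); intros t Ht;
    destruct (Hgap t i j Hi Hj) as [Hxgap Hvgap].
  - eapply Rle_trans; [exact Hxgap| apply HCW; auto].
  - eapply Rle_trans; [exact Hvgap| apply HCW; auto].
Qed.

End MeanUnsaturated.

Section Convergent.

Hypothesis N_pos : (0 < N)%nat.
Hypothesis consensus : forall i j, (i < N)%nat -> (j < N)%nat ->
  tends_to_0_at_infty (fun t => x i t - x j t) /\ tends_to_0_at_infty (fun t => v i t - v j t).

Lemma gaps_eventually_small rho : 0 < rho -> exists T, t0 <= T /\ forall t, T <= t ->
  forall i j, (i < N)%nat -> (j < N)%nat -> Rabs (x i t - x j t) < rho /\ Rabs (v i t - v j t) < rho.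
Proof.
  intros Hrho.
  destruct (tends_to_0_uniform N (fun i j t => x i t - x j t) t0) with (rho := rho)
    as [Tx [HTx Hx]]; [intros; apply consensus; auto| auto|].
  destruct (tends_to_0_uniform N (fun i j t => v i t - v j t) t0) with (rho := rho)
    as [Tv [HTv Hv]]; [intros; apply consensus; auto| auto|].
  exists (Rmax Tx Tv). split; [eapply Rle_trans; [apply HTx| apply Rmax_l]|].
  intros t Ht i j Hi Hj. pose proof (Rmax_l Tx Tv). pose proof (Rmax_r Tx Tv).
  split; [apply Hx| apply Hv]; auto; lra.
Qed.

Lemma velocity_dev_abs_lt rho t : t0 <= t ->
  (forall i j, (i < N)%nat -> (j < N)%nat -> Rabs (v i t - v j t) < rho) ->
  forall i, (i < N)%nat -> Rabs (v i t - m) <= rho.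
Proof.
  intros Ht Hgap. apply (sub_mean_abs_le N (fun i => v i t)); auto.
  - rewrite velocity_sum_const; auto.
  - intros i j Hi Hj. left. auto.
Qed.

Lemma energy_eventually_small eta : 0 < eta -> exists T, t0 <= T /\ forall t, T <= t -> energy t <= eta.
Proof.
  intros Heta. set (c := / 4 * total_weight N al + / 2 * INR N + 1).
  pose proof (total_weight_nonneg N al al_nonneg). pose proof (pos_INR N).
  set (rho := Rmin 1 (eta / c)).
  assert (Hrho : 0 < rho) by (apply Rmin_pos; [lra| apply Rdiv_lt_0_compat; unfold c; lra]).
  assert (Hrho1 : rho <= 1) by apply Rmin_l.
  assert (Hrhoc : rho * c <= eta).
  { apply Rle_trans with (eta / c * c); [apply Rmult_le_compat_r; [unfold c; lra| apply Rmin_r]|].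
    right. field. unfold c. lra. }
  destruct (gaps_eventually_small rho Hrho) as [T [HT Hgap]].
  exists T. split; auto. intros t Ht.
  assert (Hx : edge_energy N al (fun i => x i t) <= total_weight N al * (rho * rho)).
  { unfold edge_energy, edge_form, total_weight. rewrite Rmult_comm, <- sumN_scal.
    apply sumN_le; intros i Hi. rewrite <- sumN_scal. apply sumN_le; intros j Hj.
    destruct (Hgap t Ht i j Hi Hj) as [Hxij _].
    pose proof (Rabs_pos (x i t - x j t)).
    rewrite <- (Rabs_right ((x i t - x j t) * (x i t - x j t))), Rabs_mult by (apply Rle_ge, Rle_0_sqr).
    rewrite (Rmult_comm (rho * rho)). apply Rmult_le_compat_l; [auto| nra]. }
  assert (Hv : velocity_dev_sumsq t <= INR N * (rho * rho)).
  { unfold velocity_dev_sumsq. rewrite <- sumN_const. apply sumN_le; intros i Hi.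
    assert (Habs : Rabs (v i t - m) <= rho)
      by (apply (velocity_dev_abs_lt rho t); [lra| intros; apply Hgap; auto| auto]).
    pose proof (Rabs_pos (v i t - m)).
    rewrite <- (Rabs_right ((v i t - m) * (v i t - m))), Rabs_mult by (apply Rle_ge, Rle_0_sqr).
    nra. }
  assert (rho * rho * c <= rho * c) by (apply Rmult_le_compat_r; [unfold c|]; nra).
  unfold energy, c in *. nra.
Qed.

Lemma clamp_eventually_equal : s < Rabs m -> exists T, t0 <= T /\ forall t, T <= t ->
  forall i j, (i < N)%nat -> (j < N)%nat -> clamp s (v i t) = clamp s (v j t).
Proof.
  intros Hm. set (rho := (Rabs m - s) / 2).
  destruct (gaps_eventually_small rho) as [T [HT Hgap]]; [unfold rho; lra|].
  exists T. split; auto. intros t Ht.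
  assert (Hdev : forall i, (i < N)%nat -> Rabs (v i t - m) <= rho)
    by (apply (velocity_dev_abs_lt rho t); [lra| intros; apply Hgap; auto]).
  (* all velocities are past the saturation level on the same side as the mean *)
  assert (Hsame : forall i, (i < N)%nat -> clamp s (v i t) = clamp s m).
  { intros i Hi. pose proof (Rabs_le_bounds _ _ (Hdev i Hi)).
    unfold rho in *. destruct (Rcase_abs m); [rewrite Rabs_left in * by auto| rewrite Rabs_right in * by auto].
    - rewrite !clamp_below; lra.
    - rewrite !clamp_above; lra. }
  intros i j Hi Hj. now rewrite !Hsame.
Qed.

Lemma energy_eventually_zero : s < Rabs m -> exists T, t0 <= T /\ energy T = 0.
Proof.
  intros Hm. destruct (clamp_eventually_equal Hm) as [T [HT Hclamp]].
  assert (Hdis : forall t, T <= t -> dissipation t = 0).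
  { intros t Ht. unfold dissipation, edge_form.
    rewrite (sumN_ext _ _ (fun _ => 0)); [rewrite sumN_const; ring|]. intros i Hi.
    rewrite (sumN_ext _ _ (fun _ => 0)); [rewrite sumN_const; ring|]. intros j Hj.
    rewrite (Hclamp t Ht i j Hi Hj). ring. }
  assert (Hconst : forall t, T <= t -> energy T <= energy t).
  { intros t Ht.
    assert (Hd : forall u, T <= u -> derivable_pt_lim (fun u => - energy u) u 0).
    { intros u Hu. replace 0 with (- (- / 2 * dissipation u)) by (rewrite Hdis; auto; ring).
      apply derivable_pt_lim_opp, energy_derivative. lra. }
    pose proof (nonincreasing_of_derive_nonpos _ _ T Hd (fun _ _ => Rle_refl 0) T t (Rle_refl T) Ht).
    simpl in *. lra. }
  exists T. split; auto. apply Rle_antisym; [|apply energy_nonneg].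
  apply Rnot_lt_le. intros Hpos.
  destruct (energy_eventually_small (energy T / 2)) as [T' [_ HT']]; [lra|].
  pose proof (Hconst (Rmax T T') (Rmax_l T T')). pose proof (HT' (Rmax T T') (Rmax_r T T')). lra.
Qed.

Lemma mean_velocity_bound : connected_graph N al ->
  ~ (forall i j, (i < N)%nat -> (j < N)%nat -> x i t0 = x j t0 /\ v i t0 = v j t0) ->
  Rabs m <= s.
Proof.
  intros Hconn Hnc. apply Rnot_lt_le. intros Hm.
  destruct (energy_eventually_zero Hm) as [T [HT HW]].
  apply Hnc, consensus_of_energy_zero; auto. apply (energy_zero_backward T); auto.
Qed.

End Convergent.

End Dynamics.

Theorem theorem4 (N : nat) (alpha : nat -> nat -> R) (s t0 : R)
  (x v : nat -> R -> R)
  (Hsym : forall i j, (i < N)%nat -> (j < N)%nat -> alpha i j = alpha j i)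
  (Hnn : forall i j, (i < N)%nat -> (j < N)%nat -> 0 <= alpha i j)
  (Hconn : connected_graph N alpha)
  (Hs : 0 < s)
  (Hx : forall i t, (i < N)%nat -> t0 <= t ->
          derivable_pt_lim (x i) t (v i t))
  (Hv : forall i t, (i < N)%nat -> t0 <= t ->
          derivable_pt_lim (v i) t
            (sumN N (fun j => alpha i j *
               ((x j t - x i t) + (sat s (v j t) - sat s (v i t))))))
  (Hnc : ~ (forall i j, (i < N)%nat -> (j < N)%nat ->
              x i t0 = x j t0 /\ v i t0 = v j t0)) :
  (forall i j, (i < N)%nat -> (j < N)%nat ->
     tends_to_0_at_infty (fun t => x i t - x j t) /\
     tends_to_0_at_infty (fun t => v i t - v j t))
  <-> / INR N * Rabs (sumN N (fun i => v i t0)) <= s.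
Proof.
  assert (HN : (0 < N)%nat) by (destruct N; [exfalso; apply Hnc; intros; lia| lia]).
  assert (HNr : 0 < INR N) by (apply lt_0_INR; auto).
  set (m := / INR N * sumN N (fun i => v i t0)).
  assert (Hmean : sumN N (fun i => v i t0) = INR N * m) by (unfold m; field; lra).
  replace (/ INR N * Rabs (sumN N (fun i => v i t0))) with (Rabs m)
    by (unfold m; rewrite Rabs_mult, Rabs_right; [reflexivity| left; apply Rinv_0_lt_compat; lra]).
  split.
  - intros Hconv. apply (mean_velocity_bound N alpha s t0 x v); auto.
  - intros Hm%Rabs_le_bounds i j Hi Hj.
    apply (consensus_of_mean_unsaturated N alpha s t0 x v Hsym Hnn Hs Hx Hv m); auto.
Qed.
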